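(* Consider the double integrator $\dot x_1=x_2$, $\dot x_2=u$ with $u\in U=[-1,1]$ and $Q=[-1,1]^2$, using the $\infty$-norm. Then $Q$ is not controlled invariant, and not controlled $\tau$-recurrent for any $\tau<2$, so $h_{\mathrm{inv}}(Q)=+\infty$ and $h_{\mathrm{rec}}(\tau,Q)=+\infty$ for $\tau<2$; moreover $Q$ is controlled $2$-recurrent and $h_{\mathrm{rec}}(\tau,Q)\le 2/\ln 2$ for all $\tau\ge2$.
   Context: Controls are piecewise continuous functions $\mathbb R_{\ge0}\to U$; $\xi(x,u,t)$ the solution; $N_\varepsilon(Q)=\{y:\exists x\in Q,\|x-y\|_\infty\le\varepsilon\}$; $\log$ base 2. Controlled invariant: for each $x\in Q$ some $u$ keeps $\xi(x,u,t)\in Q$ for all $t\ge0$. Controlled $\tau$-recurrent: for each $x\in Q$ some $u$ satisfies: for all $t\ge0$ there is $t'\in[t,t+\tau]$ with $\xi(x,u,t')\in Q$. A trajectory is $(T,\varepsilon,\tau,Q)$-recurrent if for every $t\in[0,T-\tau]$ there is $t'\in[t,t+\tau]$ with $\xi(x,u,t')\in N_\varepsilon(Q)$; $r_{\mathrm{rec}}(T,\varepsilon,\tau,Q)$ is the minimal cardinality of a set $S$ of controls such that every $x\in Q$ has some $u\in S$ making $\xi(x,u,\cdot)$ $(T,\varepsilon,\tau,Q)$-recurrent ($\infty$ if none), and $h_{\mathrm{rec}}(\tau,Q)=\lim_{\varepsilon\searrow0}\limsup_{T\to\infty}\frac1T\log r_{\mathrm{rec}}(T,\varepsilon,\tau,Q)$.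 Invariance entropy $h_{\mathrm{inv}}(Q)$ is defined analogously with the requirement $\xi(x,u,t)\in N_\varepsilon(Q)$ for all $t\in[0,T]$. *)

From mathcomp Require Import all_boot all_order all_algebra.
From mathcomp Require Import all_classical all_reals all_analysis.
Set Implicit Arguments. Unset Strict Implicit. Unset Printing Implicit Defensive.
Import Order.TTheory GRing.Theory Num.Theory.
Import numFieldNormedType.Exports.
Local Open Scope classical_set_scope.
Local Open Scope ring_scope.

Definition piecewise_continuous (R : realType) (u : R -> R) : Prop :=
  forall T : R, exists (n : nat) (tp : nat -> R),
    [/\ tp 0%N = 0, T <= tp n,
        (forall i, (i < n)%N -> tp i < tp i.+1) &
        (forall i, (i < n)%N -> exists g : R -> R, continuous g /\
            (forall s, tp i < s < tp i.+1 -> u s = g s))].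

Definition admissible (R : realType) (u : R -> R) : Prop :=
  piecewise_continuous u /\ (forall t, 0 <= t -> -1 <= u t <= 1).

Definition xi2 (R : realType) (x : R * R) (u : R -> R) (t : R) : R :=
  x.2 + \int[(@lebesgue_measure R)]_(s in `[0, t]) u s.

Definition xi (R : realType) (x : R * R) (u : R -> R) (t : R) : R * R :=
  (x.1 + \int[(@lebesgue_measure R)]_(s in `[0, t]) xi2 x u s, xi2 x u t).

Definition Neps (R : realType) (eps : R) (Q : set (R * R)) : set (R * R) :=
  [set y | exists2 x, Q x & Num.max `|x.1 - y.1| `|x.2 - y.2| <= eps].

Definition controlled_invariant (R : realType) (Q : set (R * R)) : Prop :=
  forall x, Q x -> exists u, admissible u /\
    forall t, 0 <= t -> Q (xi x u t).

Definition controlled_recurrent (R : realType) (tau : R) (Q : set (R * R))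
  : Prop :=
  forall x, Q x -> exists u, admissible u /\
    forall t, 0 <= t -> exists t', t <= t' <= t + tau /\ Q (xi x u t').

Definition rec_traj (R : realType) (T eps tau : R) (Q : set (R * R))
  (x : R * R) (u : R -> R) : Prop :=
  forall t, 0 <= t <= T - tau ->
    exists t', t <= t' <= t + tau /\ Neps eps Q (xi x u t').

Definition inv_traj (R : realType) (T eps : R) (Q : set (R * R))
  (x : R * R) (u : R -> R) : Prop :=
  forall t, 0 <= t <= T -> Neps eps Q (xi x u t).

(* minimal cardinality of a set S of controls such that every x in Q   *)
(* has some u in S with P x u (+oo if there is no such finite set);    *)
(* a set of n controls is listed as F 0, ..., F (n-1).                 *)
Definition min_spanning (R : realType) (Q : set (R * R))
  (P : R * R -> (R -> R) -> Prop) : \bar R :=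
  ereal_inf [set (n%:R)%:E | n in
    [set n : nat | exists F : nat -> R -> R,
       (forall i, (i < n)%N -> admissible (F i)) /\
       (forall x, Q x -> exists2 i, (i < n)%N & P x (F i))]].

Definition r_rec (R : realType) (T eps tau : R) (Q : set (R * R)) : \bar R :=
  min_spanning Q (rec_traj T eps tau Q).

Definition r_inv (R : realType) (T eps : R) (Q : set (R * R)) : \bar R :=
  min_spanning Q (inv_traj T eps Q).

Definition elog2 (R : realType) (r : \bar R) : \bar R :=
  match r with
  | r'%:E => (ln r' / ln 2)%:E
  | +oo%E => +oo%E
  | -oo%E => -oo%E
  end.

Definition entropy_of (R : realType) (r : R -> R -> \bar R) : \bar R :=
  lim ((fun eps : R =>
          limf_esup (fun T : R => ((T^-1)%:E * elog2 (r T eps))%E)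
                    (pinfty_nbhs R))
       @ 0^'+).

Definition h_rec (R : realType) (tau : R) (Q : set (R * R)) : \bar R :=
  entropy_of (fun T eps => r_rec T eps tau Q).

Definition h_inv (R : realType) (Q : set (R * R)) : \bar R :=
  entropy_of (fun T eps => r_inv T eps Q).

Definition Qsq (R : realType) : set (R * R) :=
  [set x | -1 <= x.1 <= 1 /\ -1 <= x.2 <= 1].

From mathcomp Require Import all_boot all_order all_algebra.
From mathcomp Require Import all_classical all_reals all_analysis.
From mathcomp Require Import ring lra.
Set Implicit Arguments. Unset Strict Implicit. Unset Printing Implicit Defensive.
Import Order.TTheory GRing.Theory Num.Theory.
Import numFieldNormedType.Exports.
Local Open Scope classical_set_scope.
Local Open Scope ring_scope.

(** From the corner (1, 1) the position satisfies x1(t) >= 1 + t - t^2/2 whatever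
    the control, so the state is outside Q during the whole time interval (0, 2):
    Q is neither invariant nor tau-recurrent for tau < 2, and for small eps no set
    of controls at all is (T, eps)-spanning, whence infinite entropies.
    Conversely, braking at full power (and, if that overshoots, braking one unit
    longer and accelerating for one unit) brings every state of Q back to rest in
    Q within time 2.  Since a control steering p also steers a state x with
    offsets 0 <= x - p along the trajectory shifted by (x.1 - p.1 + (x.2 - p.2) t,
    x.2 - p.2), the recurrent controls of a grid of mesh about eps / T span,
    so r_rec grows only quadratically in T and h_rec tau Q = 0 for tau >= 2. *)

Section integrals.
Context {R : realType}.
Notation mu := (@lebesgue_measure R).

Lemma piecewise_continuous_measurable (u : R -> R) (T : R) :
  piecewise_continuous u -> measurable_fun `[0, T] u.
Proof.
move=> /(_ T) [n [tp [tp0 Ttp tp_incr tp_cont]]].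
suff meas_upto k : (k <= n)%N -> measurable_fun `[0, tp k] u.
  apply: measurable_funS (meas_upto n (leqnn n)) => //.
  by move=> s /=; rewrite !in_itv/= => /andP[-> sT]; exact: le_trans sT Ttp.
elim: k => [|k IH] kn; first by rewrite tp0 set_itv1; exact: measurable_fun_set1.
have [g [cg eg]] := tp_cont k kn.
apply: (@measurable_funS _ _ _ _
  (`[0, tp k] `|` `]tp k, tp k.+1[ `|` [set tp k.+1])).
- by apply: measurableU => //; apply: measurableU.
- move=> s /=; rewrite in_itv/= => /andP[s0 s1].
  have [sk|ks] := leP s (tp k); first by left; left; rewrite in_itv/= s0 sk.
  have [sk1|ks1] := ltP s (tp k.+1); first by left; right; rewrite in_itv/= ks sk1.
  by right; apply/eqP; rewrite eq_le s1 ks1.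
- apply/measurable_funU => //; first exact: measurableU.
  split; last exact: measurable_fun_set1.
  apply/measurable_funU => //; split; first by apply: IH; exact: ltnW.
  apply: (@eq_measurable_fun _ _ _ _ _ g).
    by move=> s; rewrite inE/= in_itv/= => /eg ->.
  exact: measurable_funS (measurable_realfun.continuous_measurable_fun cg).
Qed.

Lemma lebesgue_measure_itv_cc_fine (c d : R) : c <= d -> fine (mu `[c, d]) = d - c.
Proof.
rewrite le_eqVlt => /predU1P[->|cd].
  by rewrite lebesgue_measure_itv/= lte_fin ltxx subrr.
by rewrite lebesgue_measure_itv/= lte_fin cd -EFinB.
Qed.

Lemma lebesgue_measure_itv_oc_fine (c d : R) : c <= d -> fine (mu `]c, d]) = d - c.
Proof.
rewrite le_eqVlt => /predU1P[->|cd].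
  by rewrite lebesgue_measure_itv/= lte_fin ltxx subrr.
by rewrite lebesgue_measure_itv/= lte_fin cd -EFinB.
Qed.

Lemma continuous_integrable_itv (f : R -> R) (c d : R) :
  continuous f -> mu.-integrable `[c, d] (EFin \o f).
Proof.
move=> cf; apply: continuous_compact_integrable; first exact: segment_compact.
exact: continuous_subspaceT.
Qed.

Lemma cst_integrable_itv (k c d : R) : mu.-integrable `[c, d] (EFin \o cst k).
Proof. by apply: continuous_integrable_itv => ?; exact: cvg_cst. Qed.

Lemma affine_continuous (al be : R) : continuous (fun s : R => al + be * s).
Proof.
move=> ?; apply: continuousD; first exact: cvg_cst.
by apply: continuousM; [exact: cvg_cst|exact: cvg_id].
Qed.

Lemma Rintegral_affine (c d al be : R) : c <= d ->
  \int[mu]_(s in `[c, d]) (al + be * s) = al * (d - c) + be * (d ^+ 2 - c ^+ 2) / 2.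
Proof.
rewrite le_eqVlt => /predU1P[<-|cd].
  by rewrite set_itv1 Rintegral_set1 !subrr; lra.
pose F s := al * s + be * s ^+ 2 / 2.
have dF x : derivable F x 1 by apply: ex_derive.
have cF x : F @ x --> F x.
  exact: differentiable_continuous (proj1 (derivable1_diffP _ _) (dF x)).
rewrite /Rintegral (@continuous_FTC2 _ _ F) //.
- by rewrite -EFinB /F /=; lra.
- by apply: continuous_in_subspaceT => x _; exact: affine_continuous.
- split; [by move=> x _; exact: dF|exact: cvg_at_right_filter|exact: cvg_at_left_filter].
- move=> x _; rewrite derive1E derive_val /= !scaler0 add0r.
  have sc (a b : R) : a *: b = a * b by [].
  by rewrite !sc !mulr1; lra.
Qed.

Lemma Rintegral_itv_split (f : R -> R) (s y : R) :
  mu.-integrable `[0, s] (EFin \o f) -> 0 <= y -> y <= s ->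
  \int[mu]_(r in `[0, s]) f r = \int[mu]_(r in `[0, y]) f r + \int[mu]_(r in `]y, s]) f r.
Proof. by move=> fi y0 ys; rewrite -(Rintegral_itvB fi) ?bnd_simp //; ring. Qed.

End integrals.

Section trajectories.
Context {R : realType}.
Notation mu := (@lebesgue_measure R).

Lemma admissible_integrable (u : R -> R) (T : R) :
  admissible u -> mu.-integrable `[0, T] (EFin \o u).
Proof.
move=> [pcu bu]; apply: measurable_bounded_integrable => //.
- by apply: compact_finite_measure; exact: segment_compact.
- exact: piecewise_continuous_measurable.
- exists 1; split; rewrite ?num_real // => M M1 s.
  rewrite /= in_itv/= => /andP[s0 _]; have := bu s s0.
  by rewrite ler_norml => /andP[? ?]; apply/andP; split; lra.
Qed.

Lemma admissible_Rintegral_bounds (u : R -> R) (t : R) : admissible u -> 0 <= t ->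
  - t <= \int[mu]_(s in `[0, t]) u s <= t.
Proof.
move=> au t0; have iu := admissible_integrable t au.
have ub s : s \in `[0, t] -> -1 <= u s <= 1.
  by rewrite in_itv/= => /andP[s0 _]; case: au => _ /(_ s s0).
apply/andP; split.
  apply: le_trans (le_Rintegral _ (cst_integrable_itv (-1) 0 t) iu _) => //.
    by rewrite Rintegral_cst// lebesgue_measure_itv_cc_fine// subr0; lra.
  by move=> s /= /ub /andP[].
apply: le_trans (le_Rintegral _ iu (cst_integrable_itv 1 0 t) _) _ => //.
  by move=> s /= /ub /andP[].
by rewrite Rintegral_cst// lebesgue_measure_itv_cc_fine// subr0; lra.
Qed.

Lemma xi2_integrable (x : R * R) (u : R -> R) (T : R) : admissible u -> 0 <= T ->
  mu.-integrable `[0, T] (EFin \o xi2 x u).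
Proof.
move=> au T0; apply: measurable_bounded_integrable => //.
- by apply: compact_finite_measure; exact: segment_compact.
- apply: measurable_realfun.measurable_funD => //.
  apply: measurable_realfun.subspace_continuous_measurable_fun => //.
  exact: (parameterized_integral_continuous T0 (admissible_integrable T au)).
- exists (`|x.2| + T); split; rewrite ?num_real // => M M1 s.
  rewrite /= in_itv/= => /andP[s0 sT].
  have /andP[? ?] := admissible_Rintegral_bounds au s0.
  apply: le_trans (ltW M1); apply: le_trans (ler_normD _ _) _.
  by rewrite lerD2l ler_norml; apply/andP; split; lra.
Qed.

Lemma xi1_ge_full_braking (x : R * R) (u : R -> R) (t : R) : admissible u -> 0 <= t ->
  x.1 + x.2 * t - t ^+ 2 / 2 <= (xi x u t).1.
Proof.
move=> au t0.
have -> : x.1 + x.2 * t - t ^+ 2 / 2 = x.1 + \int[mu]_(s in `[0, t]) (x.2 + (-1) * s).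
  by rewrite Rintegral_affine//; lra.
rewrite lerD2l; apply: le_Rintegral => //; first exact/continuous_integrable_itv/affine_continuous.
  exact: xi2_integrable.
move=> s; rewrite /= in_itv/= => /andP[s0 _].
by have /andP[? _] := admissible_Rintegral_bounds au s0; rewrite /xi2; lra.
Qed.

Lemma xi_translate (x p : R * R) (u : R -> R) (t : R) : admissible u -> 0 <= t ->
  xi x u t = ((xi p u t).1 + (x.1 - p.1) + (x.2 - p.2) * t, (xi p u t).2 + (x.2 - p.2)).
Proof.
move=> au t0; rewrite /xi /=; congr (_, _); last by rewrite /xi2; ring.
have -> : \int[mu]_(s in `[0, t]) xi2 x u s =
          \int[mu]_(s in `[0, t]) (xi2 p u s + (x.2 - p.2)).
  by apply: eq_Rintegral => s _; rewrite /xi2; ring.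
rewrite RintegralD//; [|exact: xi2_integrable|exact: cst_integrable_itv].
by rewrite Rintegral_cst// lebesgue_measure_itv_cc_fine// subr0; ring.
Qed.

End trajectories.

Section bang_bang.
Context {R : realType}.
Notation mu := (@lebesgue_measure R).

Definition bang_bang (sg t1 t2 : R) : R -> R :=
  fun s => if s <= t1 then - sg else if s <= t2 then sg else 0.

Lemma piecewise_constant_continuous (u : R -> R) :
  (forall T, exists (n : nat) (tp c : nat -> R),
    [/\ tp 0%N = 0, T <= tp n, (forall i, (i < n)%N -> tp i < tp i.+1) &
        (forall i, (i < n)%N -> forall s, tp i < s < tp i.+1 -> u s = c i)]) ->
  piecewise_continuous u.
Proof.
move=> pc T; have [n [tp [c [tp0 Ttp tp_incr uc]]]] := pc T.
exists n, tp; split => // i ni; exists (cst (c i)); split; last exact: uc.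
by move=> ?; exact: cvg_cst.
Qed.

Lemma bang_bang_admissible (sg t1 t2 : R) : -1 <= sg <= 1 -> 0 <= t1 -> t1 <= t2 ->
  admissible (bang_bang sg t1 t2).
Proof.
move=> /andP[sg1 sg2] t10 t12; split; last first.
  by move=> t _; rewrite /bang_bang; case: ifP => _; [|case: ifP => _]; apply/andP; split; lra.
apply: piecewise_constant_continuous => T; pose M := Num.max T t2.
have [TM t2M] : T <= M /\ t2 <= M by rewrite !le_max !lexx orbT.
case: (ltgtP 0 t1) t10 => [t1p _|//|t10 _]; case: (ltgtP t1 t2) t12 => [t12 _|//|t12 _].
- exists 3%N, (nth (M + 1) [:: 0; t1; t2]), (nth 0 [:: - sg; sg]); split => //=; first lra.
    by case=> [|[|[|i]]] //= _; lra.
  by case=> [|[|[|i]]] //= _ s /andP[? ?]; rewrite /bang_bang;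
    (case: leP => ?; [|case: leP => ?]); lra.
- exists 2%N, (nth (M + 1) [:: 0; t1]), (nth 0 [:: - sg; 0]); split => //=; first lra.
    by case=> [|[|i]] //= _; lra.
  by case=> [|[|i]] //= _ s /andP[? ?]; rewrite /bang_bang;
    (case: leP => ?; [|case: leP => ?]); lra.
- exists 2%N, (nth (M + 1) [:: 0; t2]), (nth 0 [:: sg; 0]); split => //=; first lra.
    by case=> [|[|i]] //= _; lra.
  by case=> [|[|i]] //= _ s /andP[? ?]; rewrite /bang_bang;
    (case: leP => ?; [|case: leP => ?]); lra.
- exists 1%N, (nth (M + 1) [:: 0]), (fun=> 0); split => //=; first lra.
    by case=> [|i] //= _; lra.
  by case=> [|i] //= _ s /andP[? ?]; rewrite /bang_bang;
    (case: leP => ?; [|case: leP => ?]); lra.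
Qed.

Variables (sg t1 t2 : R).
Hypotheses (sg_bnd : -1 <= sg <= 1) (t1_ge0 : 0 <= t1) (t12 : t1 <= t2).
Let u := bang_bang sg t1 t2.
Let u_adm : admissible u := bang_bang_admissible sg_bnd t1_ge0 t12.

Lemma bang_bang_Rintegral_first s : 0 <= s -> s <= t1 ->
  \int[mu]_(r in `[0, s]) u r = - sg * s.
Proof.
move=> s0 st1; rewrite (@eq_Rintegral _ _ _ _ _ (cst (- sg))).
  by rewrite Rintegral_cst// lebesgue_measure_itv_cc_fine// subr0.
move=> r; rewrite inE/= in_itv/= => /andP[_ rs].
by rewrite /u /bang_bang ifT//; exact: le_trans rs st1.
Qed.

Lemma bang_bang_Rintegral_second s : t1 <= s -> s <= t2 ->
  \int[mu]_(r in `[0, s]) u r = - sg * t1 + sg * (s - t1).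
Proof.
move=> st1 st2; rewrite (Rintegral_itv_split (admissible_integrable s u_adm) t1_ge0 st1).
rewrite bang_bang_Rintegral_first // (@eq_Rintegral _ _ _ _ _ (cst sg)).
  by rewrite Rintegral_cst// lebesgue_measure_itv_oc_fine.
move=> r; rewrite inE/= in_itv/= => /andP[r1 rs].
by rewrite /u /bang_bang ifF ?ifT ?(le_trans rs st2) //; apply/negbTE; rewrite -ltNge.
Qed.

Lemma bang_bang_Rintegral_final s : t2 <= s ->
  \int[mu]_(r in `[0, s]) u r = - sg * t1 + sg * (t2 - t1).
Proof.
move=> st2; have t20 := le_trans t1_ge0 t12.
rewrite (Rintegral_itv_split (admissible_integrable s u_adm) t20 st2).
rewrite bang_bang_Rintegral_second // (@eq_Rintegral _ _ _ _ _ (cst 0)).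
  by rewrite Rintegral_cst// mul0r addr0.
move=> r; rewrite inE/= in_itv/= => /andP[r1 rs].
rewrite /u /bang_bang ifF ?ifF //; apply/negbTE; rewrite -ltNge //.
exact: le_lt_trans t12 r1.
Qed.

Lemma xi_bang_bang_first (x : R * R) s : 0 <= s -> s <= t1 ->
  xi x u s = (x.1 + x.2 * s - sg * s ^+ 2 / 2, x.2 - sg * s).
Proof.
move=> s0 st1; rewrite /xi /xi2 bang_bang_Rintegral_first //; congr (_, _); last by ring.
have -> : \int[mu]_(r in `[0, s]) xi2 x u r = \int[mu]_(r in `[0, s]) (x.2 + (- sg) * r).
  apply: eq_Rintegral => r; rewrite inE/= in_itv/= => /andP[r0 rs].
  by rewrite /xi2 bang_bang_Rintegral_first ?(le_trans rs st1).
by rewrite Rintegral_affine //; ring.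
Qed.

Lemma xi_bang_bang_final (x : R * R) s : t2 <= s ->
  xi x u s = (x.1 + (x.2 * t1 - sg * t1 ^+ 2 / 2)
                   + ((x.2 - 2 * sg * t1) * (t2 - t1) + sg * (t2 ^+ 2 - t1 ^+ 2) / 2)
                   + (x.2 - 2 * sg * t1 + sg * t2) * (s - t2),
              x.2 - 2 * sg * t1 + sg * t2).
Proof.
move=> st2; have t20 := le_trans t1_ge0 t12; have s0 := le_trans t20 st2.
rewrite /xi /xi2 bang_bang_Rintegral_final //; congr (_, _); last by ring.
rewrite (Rintegral_itv_split (xi2_integrable x u_adm s0) t20 st2).
rewrite (Rintegral_itv_split (xi2_integrable x u_adm t20) t1_ge0 t12).
rewrite Rintegral_itv_obnd_cbnd; last first.
  apply: integrableS (xi2_integrable x u_adm t20) => //.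
  by move=> r /=; rewrite !in_itv/= => /andP[r1 ->]; rewrite andbT (le_trans t1_ge0 (ltW r1)).
have -> : \int[mu]_(r in `[0, t1]) xi2 x u r = \int[mu]_(r in `[0, t1]) (x.2 + (- sg) * r).
  apply: eq_Rintegral => r; rewrite inE/= in_itv/= => /andP[r0 rs].
  by rewrite /xi2 bang_bang_Rintegral_first //; ring.
have -> : \int[mu]_(r in `[t1, t2]) xi2 x u r =
          \int[mu]_(r in `[t1, t2]) ((x.2 - 2 * sg * t1) + sg * r).
  apply: eq_Rintegral => r; rewrite inE/= in_itv/= => /andP[r0 rs].
  by rewrite /xi2 bang_bang_Rintegral_second //; ring.
have -> : \int[mu]_(r in `]t2, s]) xi2 x u r =
          \int[mu]_(r in `]t2, s]) (x.2 - 2 * sg * t1 + sg * t2).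
  apply: eq_Rintegral => r; rewrite inE/= in_itv/= => /andP[r0 rs].
  by rewrite /xi2 bang_bang_Rintegral_final ?ltW //; ring.
by rewrite !Rintegral_affine // Rintegral_cst // lebesgue_measure_itv_oc_fine //; ring.
Qed.

End bang_bang.

Section recurrence.
Context {R : realType}.

Definition returns_within (tau : R) (Q : set (R * R)) (x : R * R) (u : R -> R) : Prop :=
  forall t, 0 <= t -> exists t', t <= t' <= t + tau /\ Q (xi x u t').

(* Up to the symmetry x |-> sg x the velocity [be] is nonnegative and [- sg] brakes.
   Full braking stops the state at abscissa [al + be^2 / 2]; if that overshoots 1,
   braking one unit longer and then accelerating for one unit stops it at
   [al + be^2 / 2 - 1], and it is back in Q already at time [be + sqrt D]. *)
Lemma returns_within_2_signed (sg a b : R) : (sg = 1 \/ sg = -1) -> 0 <= sg * b ->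
  @Qsq R (a, b) -> exists u, admissible u /\ returns_within 2 (@Qsq R) (a, b) u.
Proof.
move=> sg_pm sb [/= /andP[a1 a2] /andP[b1 b2]].
have sg_bnd : -1 <= sg <= 1 by case: sg_pm => ->; apply/andP; split; lra.
have sgsg : sg * sg = 1 by case: sg_pm => ->; ring.
set be := sg * b; set al := sg * a.
have be1 : be <= 1 by rewrite /be; case: sg_pm => ->; lra.
have /andP[al1 al2] : -1 <= al <= 1 by rewrite /al; case: sg_pm => ->; apply/andP; split; lra.
have ea : a = sg * al by rewrite /al mulrA sgsg mul1r.
have eb : b = sg * be by rewrite /be mulrA sgsg mul1r.
have be0 : 0 <= be by [].
clearbody al be.
have [stop_inside|overshoot] := leP (al + be ^+ 2 / 2) 1.
  exists (bang_bang sg be be); split; first exact: bang_bang_admissible.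
  have Q_after s : be <= s -> @Qsq R (xi (a, b) (bang_bang sg be be) s).
    move=> bs; rewrite (xi_bang_bang_final sg_bnd be0 (lexx be)) //= /Qsq /=.
    by rewrite ea eb; case: sg_pm => ->; split; apply/andP; split; nra.
  move=> t t0; have [tb|bt] := leP t be.
    by exists be; split; [apply/andP; split; lra|exact: Q_after].
  by exists t; split; [apply/andP; split; lra|apply: Q_after; exact: ltW].
have be1_ge0 : 0 <= be + 1 by lra.
exists (bang_bang sg (be + 1) (be + 2)); split; first by apply: bang_bang_admissible => //; lra.
set D := be ^+ 2 + 2 * al - 2.
have D0 : 0 <= D by rewrite /D; lra.
have D1 : D <= 1 by rewrite /D; nra.
set q := Num.sqrt D.
have q0 : 0 <= q by exact: sqrtr_ge0.
have qq : q ^+ 2 = D by rewrite /q sqr_sqrtr.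
have eD : D = be ^+ 2 + 2 * al - 2 by [].
clearbody q D.
have q1 : q <= 1 by nra.
have Q_after s : be + 2 <= s -> @Qsq R (xi (a, b) (bang_bang sg (be + 1) (be + 2)) s).
  move=> bs; rewrite (xi_bang_bang_final sg_bnd be1_ge0 (_ : be + 1 <= be + 2)) //=; last lra.
  by rewrite /Qsq /= ea eb; case: sg_pm => ->; split; apply/andP; split; nra.
have Q_reentry : @Qsq R (xi (a, b) (bang_bang sg (be + 1) (be + 2)) (be + q)).
  rewrite (xi_bang_bang_first sg (be + 2) (a, b) (_ : 0 <= be + q) (_ : be + q <= be + 1)) /=;
    [|lra|lra].
  by rewrite /Qsq /= ea eb; case: sg_pm => ->; split; apply/andP; split; nra.
move=> t t0; have [tq|qt] := leP t (be + q).
  by exists (be + q); split; [apply/andP; split; nra|exact: Q_reentry].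
have [tb2|bt2] := leP t (be + 2).
  by exists (be + 2); split; [apply/andP; split; nra|apply: Q_after; lra].
by exists t; split; [apply/andP; split; lra|apply: Q_after; lra].
Qed.

Lemma Qsq_controlled_recurrent_2 : controlled_recurrent 2 (@Qsq R).
Proof.
move=> [a b] Qab; have [b0|b0] := leP 0 b.
  by apply: (@returns_within_2_signed 1) => //; [left|lra].
by apply: (@returns_within_2_signed (-1)) => //; [right|lra].
Qed.

End recurrence.

Section escape.
Context {R : realType}.

Lemma Qsq11 : @Qsq R (1, 1).
Proof. by split; apply/andP; split => /=; lra. Qed.

Lemma Qsq_origin : @Qsq R (0, 0).
Proof. by split; apply/andP; split => /=; lra. Qed.

Lemma xi11_1_ge (u : R -> R) (t : R) : admissible u -> 0 <= t ->
  1 + t - t ^+ 2 / 2 <= (xi (1, 1) u t).1.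
Proof. by move=> au t0; have := xi1_ge_full_braking (1, 1) au t0; rewrite /= mul1r. Qed.

Lemma Neps_Qsq_1_le (eps : R) (z : R * R) : Neps eps (@Qsq R) z -> z.1 <= 1 + eps.
Proof.
move=> [y [/andP[_ y1] _]]; rewrite ge_max => /andP[+ _].
by rewrite ler_norml => /andP[? ?]; lra.
Qed.

Lemma Qsq_not_controlled_invariant : ~ controlled_invariant (@Qsq R).
Proof.
move=> /(_ (1, 1) Qsq11) [u [au /(_ 1 ler01) [/andP[_ +] _]]].
by have := xi11_1_ge au ler01; lra.
Qed.

Lemma Qsq_not_controlled_recurrent (tau : R) : 0 < tau < 2 -> ~ controlled_recurrent tau (@Qsq R).
Proof.
move=> /andP[tau0 tau2] /(_ (1, 1) Qsq11) [u [au /(_ (1 - tau / 2))]].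
case=> [|t' [/andP[t1 t2] [/andP[_ +] _]]]; first lra.
by have := xi11_1_ge au (_ : 0 <= t'); nra.
Qed.

Lemma r_inv_Qsq_small_eps (eps T : R) : 0 < eps < 1 / 2 -> 1 <= T ->
  r_inv T eps (@Qsq R) = +oo%E.
Proof.
move=> /andP[e0 e1] T1; apply/eqP; rewrite eq_le leey /=.
apply: le_ereal_inf_tmp => _ [n [F [aF cov]] <-]; exfalso.
have [i ni /(_ 1) inv_i] := cov _ Qsq11.
have /Neps_Qsq_1_le : Neps eps (@Qsq R) (xi (1, 1) (F i) 1) by apply: inv_i; rewrite ler01.
by have := xi11_1_ge (aF i ni) ler01; lra.
Qed.

Lemma r_rec_Qsq_small_eps (eps T tau : R) : 0 < tau < 2 -> 0 < eps ->
  eps < (1 - tau ^+ 2 / 4) / 2 -> 2 <= T -> r_rec T eps tau (@Qsq R) = +oo%E.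
Proof.
move=> /andP[t0 t2] e0 e1 T2; apply/eqP; rewrite eq_le leey /=.
apply: le_ereal_inf_tmp => _ [n [F [aF cov]] <-]; exfalso.
have [i ni /(_ (1 - tau / 2)) rec_i] := cov _ Qsq11.
have [|t' [/andP[h1 h2] /Neps_Qsq_1_le]] := rec_i; first by apply/andP; split; lra.
by have := xi11_1_ge (aF i ni) (_ : 0 <= t'); nra.
Qed.

End escape.

Section entropy_limits.
Context {R : realType}.

Lemma exists_gt_ge_ge1 (M T0 : R) : exists x : R, [/\ M < x, T0 <= x & 1 <= x].
Proof.
exists (Num.max M (Num.max T0 1) + 1).
have : [/\ M <= Num.max M (Num.max T0 1), T0 <= Num.max M (Num.max T0 1)
          & 1 <= Num.max M (Num.max T0 1)] by rewrite !le_max !lexx !orbT.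
by case=> *; split; lra.
Qed.

Lemma limf_esup_pinfty_eventually_pinfty (g : R -> \bar R) (T0 : R) :
  (forall T, T0 <= T -> g T = +oo%E) -> limf_esup g (pinfty_nbhs R) = +oo%E.
Proof.
move=> gT; rewrite limf_esupE; apply/eqP; rewrite eq_le leey /=.
apply: le_ereal_inf_tmp => _ [V [M [_ MV]] <-].
have [x [Mx T0x _]] := exists_gt_ge_ge1 M T0.
apply: le_ereal_sup_tmp; exists (g x); first by exists x => //; exact: MV.
by rewrite gT.
Qed.

Lemma limf_esup_pinfty_eq0 (g : R -> \bar R) : (forall T, 1 <= T -> (0 <= g T)%E) ->
  (forall e : R, 0 < e -> exists T0 : R, forall T, T0 <= T -> (g T <= e%:E)%E) ->
  limf_esup g (pinfty_nbhs R) = 0%E.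
Proof.
move=> g_ge0 g_small; rewrite limf_esupE; apply/eqP; rewrite eq_le; apply/andP; split.
  apply/lee_addgt0Pr => e e0; rewrite add0e; have [T0 gT0] := g_small e e0.
  apply: ge_ereal_inf; exists (ereal_sup (g @` [set T | T0 < T])).
    by exists [set T | T0 < T] => //; exists T0; split; [exact: num_real|].
  by apply: ge_ereal_sup => _ [T /= /ltW T0T <-]; exact: gT0.
apply: le_ereal_inf_tmp => _ [V [M [_ MV]] <-].
have [x [Mx _ x1]] := exists_gt_ge_ge1 M 0.
apply: le_ereal_sup_tmp; exists (g x); first by exists x => //; exact: MV.
exact: g_ge0.
Qed.

Definition rate (r : R -> R -> \bar R) (eps : R) : \bar R :=
  limf_esup (fun T : R => ((T^-1)%:E * elog2 (r T eps))%E) (pinfty_nbhs R).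

Lemma entropy_of_eventually_cst (r : R -> R -> \bar R) (e0 : R) (c : \bar R) : 0 < e0 ->
  (forall eps, 0 < eps < e0 -> rate r eps = c) -> entropy_of r = c.
Proof.
move=> e0_gt0 rc; apply: lim_near_cst; first exact: ereal_hausdorff.
exists e0 => //= eps; rewrite /ball /= sub0r normrN => eps_e0 eps_gt0.
by apply: rc; rewrite eps_gt0 /=; move: eps_e0; rewrite gtr0_norm.
Qed.

Lemma entropy_of_pinfty (r : R -> R -> \bar R) (e0 T0 : R) : 0 < e0 ->
  (forall eps T, 0 < eps < e0 -> T0 <= T -> r T eps = +oo%E) -> entropy_of r = +oo%E.
Proof.
move=> e0_gt0 r_oo; apply: (entropy_of_eventually_cst e0_gt0) => eps eps_e0.
apply: (@limf_esup_pinfty_eventually_pinfty _ (Num.max T0 1)) => T.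
rewrite ge_max => /andP[T0T T1].
by rewrite r_oo //= muleC gt0_mulye // lte_fin invr_gt0; lra.
Qed.

End entropy_limits.

Section polynomial_growth.
Context {R : realType}.

(* The threshold comes from ln (C T) = ln a + ln (C T / a) < ln a + C T / a
   with a = 4 C / (e ln 2). *)
Lemma log2_quadratic_rate_le (C e : R) : 0 < C -> 0 < e -> exists T0 : R, 1 <= T0 /\
  forall T N : R, T0 <= T -> 1 <= N -> N <= (C * T) ^+ 2 -> T^-1 * (ln N / ln 2) <= e.
Proof.
move=> C0 e0; set L := ln (2 : R).
have L0 : 0 < L by rewrite /L ln_gt0 // ltr1n.
set a := 4 * C / (e * L).
have a0 : 0 < a by rewrite /a divr_gt0 // ?mulr_gt0.
set b := 4 * `|ln a| / (e * L).
exists (Num.max 1 b); split; first by rewrite le_max lexx.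
move=> T N; rewrite ge_max => /andP[T1 bT] N1 NCT.
have T0 : 0 < T by lra.
have CT0 : 0 < C * T by rewrite mulr_gt0.
have lnN : ln N <= 2 * ln (C * T).
  rewrite -[2]/(1 + 1) mulrDl mul1r -mulr2n -lnXn //.
  by rewrite ler_ln // posrE ?exprn_gt0 //; lra.
have lnCT : ln (C * T) <= ln a + C * T / a.
  have CTa0 : 0 < C * T / a by rewrite divr_gt0.
  have -> : ln (C * T) = ln a + ln (C * T / a).
    by rewrite -lnM ?posrE // [a * _]mulrC divfK // lt0r_neq0.
  by rewrite lerD2l; exact/ltW/ln_sublinear.
have CTa : C * T / a = T * (e * L) / 4.
  by rewrite /a; field; rewrite (gt_eqF L0) (gt_eqF e0) (gt_eqF C0).
have lna_le : 4 * `|ln a| <= T * (e * L).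
  by move: bT; rewrite /b ler_pdivrMr // mulr_gt0.
have := ler_norm (ln a).
by rewrite mulrC ler_pdivrMr // ler_pdivrMr //; nra.
Qed.

End polynomial_growth.

Section spanning_sets.
Context {R : realType}.
Implicit Types (Q : set (R * R)) (P : R * R -> (R -> R) -> Prop).

Lemma min_spanning_le Q P (n : nat) (F : nat -> R -> R) :
  (forall i, (i < n)%N -> admissible (F i)) ->
  (forall x, Q x -> exists2 i, (i < n)%N & P x (F i)) ->
  (min_spanning Q P <= n%:R%:E)%E.
Proof. by move=> aF cov; apply: ereal_inf_lbound; exists n => //; exists F. Qed.

Lemma min_spanning_ge1 Q P x : Q x -> (1 <= min_spanning Q P)%E.
Proof.
move=> Qx; apply: le_ereal_inf_tmp => _ [n [F [_ cov]] <-].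
have [i ni _] := cov _ Qx.
by rewrite lee_fin ler1n; exact: leq_ltn_trans (leq0n i) ni.
Qed.

Lemma min_spanning_fin Q P x (n : nat) (F : nat -> R -> R) : Q x ->
  (forall i, (i < n)%N -> admissible (F i)) ->
  (forall x, Q x -> exists2 i, (i < n)%N & P x (F i)) ->
  exists2 N : R, min_spanning Q P = N%:E & 1 <= N <= n%:R.
Proof.
move=> Qx aF cov; have := min_spanning_ge1 P Qx; have := min_spanning_le aF cov.
case: (min_spanning Q P) => [N|//|//] NN N1.
by exists N => //; apply/andP; split; rewrite -lee_fin.
Qed.

End spanning_sets.

Section grid_cover.
Context {R : realType}.

Definition grid_point (m j : nat) : R := -1 + j%:R / m%:R.

Lemma grid_point_bounds (m j : nat) : (0 < m)%N -> (j <= 2 * m)%N ->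
  -1 <= grid_point m j <= 1.
Proof.
move=> m0 jm; have m_gt0 : 0 < m%:R :> R by rewrite ltr0n.
have j_ge0 : 0 <= j%:R / m%:R :> R by rewrite divr_ge0.
move: jm; rewrite -(ler_nat R) natrM => jm.
have : j%:R / m%:R <= 2 :> R by rewrite ler_pdivrMr.
by rewrite /grid_point => ?; apply/andP; split; lra.
Qed.

Lemma grid_point_below (m : nat) (y : R) : (0 < m)%N -> -1 <= y <= 1 ->
  exists j : nat, [/\ (j <= 2 * m)%N, 0 <= y - grid_point m j
                    & (y - grid_point m j) * m%:R < 1].
Proof.
move=> m0 /andP[y1 y2]; have m_gt0 : 0 < m%:R :> R by rewrite ltr0n.
have p0 : 0 <= (y + 1) * m%:R by rewrite mulr_ge0 //; lra.
have /andP[t1 t2] := Num.Theory.truncn_itv p0.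
set j := Num.truncn _ in t1 t2; rewrite -natr1 in t2.
have e : (y - grid_point m j) * m%:R = (y + 1) * m%:R - j%:R.
  by rewrite /grid_point; field; rewrite gt_eqF.
exists j; split.
- by rewrite -(ler_nat R) natrM; apply: le_trans t1 _; nra.
- by rewrite -(pmulr_rge0 _ m_gt0) mulrC e; lra.
- by rewrite e; lra.
Qed.

Lemma rec_traj_translate (T eps tau : R) (Q : set (R * R)) (x p : R * R) (u : R -> R) :
  admissible u -> 2 <= tau -> returns_within 2 Q p u ->
  0 <= x.1 - p.1 -> 0 <= x.2 - p.2 -> x.1 - p.1 + (x.2 - p.2) * T <= eps -> x.2 - p.2 <= eps ->
  rec_traj T eps tau Q x u.
Proof.
move=> au tau2 ret d1 d2 d1T d2e t /andP[t0 tT].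
have [t' [/andP[tt' t't] Qt']] := ret t t0.
have t'0 : 0 <= t' by lra.
exists t'; split; first by apply/andP; split; lra.
exists (xi p u t') => //; rewrite (xi_translate x p au t'0) /=.
have : 0 <= (x.2 - p.2) * t' <= (x.2 - p.2) * T by apply/andP; split; nra.
by rewrite ge_max => /andP[? ?]; apply/andP; split; rewrite ler_norml; apply/andP; split; lra.
Qed.

Lemma returns_within_2_choice : {G : R * R -> R -> R &
  forall p, Qsq p -> admissible (G p) /\ returns_within 2 (@Qsq R) p (G p)}.
Proof.
apply: (@choice _ _ (fun p u => Qsq p -> admissible u /\ returns_within 2 (@Qsq R) p u)) => p.
have [Qp|nQp] := pselect (Qsq p); last by exists (cst 0) => /nQp.
by have [u ?] := Qsq_controlled_recurrent_2 Qp; exists u.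
Qed.

(* The (2m+1)^2 grid points of mesh 1/m < eps / (1 + T) span, and
   2m + 1 <= (4 / eps + 3) T. *)
Lemma r_rec_Qsq_quadratic (eps T tau : R) : 0 < eps -> 1 <= T -> 2 <= tau ->
  exists2 N : R, r_rec T eps tau (@Qsq R) = N%:E & 1 <= N <= ((4 / eps + 3) * T) ^+ 2.
Proof.
move=> e0 T1 tau2; have [G GQ] := returns_within_2_choice.
set m := (Num.truncn ((1 + T) / eps)).+1.
have m0 : (0 < m)%N by [].
have [m_le mM] : m%:R <= (1 + T) / eps + 1 /\ (1 + T) / eps < m%:R.
  have p0 : 0 <= (1 + T) / eps by rewrite divr_ge0 //; lra.
  have /andP[] := Num.Theory.truncn_itv p0.
  by rewrite /m -natr1; split; lra.
have m_gt0 : 0 < m%:R :> R by rewrite ltr0n.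
set K := (2 * m).+1.
pose F i : R -> R := G (grid_point m (i %/ K), grid_point m (i %% K)).
have QF i : (i < K * K)%N -> @Qsq R (grid_point m (i %/ K), grid_point m (i %% K)).
  by move=> iK; split; apply: grid_point_bounds; rewrite // -ltnS ?ltn_divLR ?ltn_pmod.
have cover x : Qsq x -> exists2 i, (i < K * K)%N & rec_traj T eps tau (@Qsq R) x (F i).
  case: x => x1 x2 [/= x1_bnd x2_bnd].
  have [j1 [j1m d1 d1m]] := grid_point_below m0 x1_bnd.
  have [j2 [j2m d2 d2m]] := grid_point_below m0 x2_bnd.
  have j2K : (j2 < K)%N by rewrite ltnS.
  have e1 : ((j1 * K + j2) %/ K = j1)%N by rewrite divnMDl // divn_small ?addn0.
  have e2 : ((j1 * K + j2) %% K = j2)%N by rewrite modnMDl modn_small.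
  have jK : (j1 * K + j2 < K * K)%N by rewrite -ltn_divLR // e1 ltnS.
  exists (j1 * K + j2)%N => //; have [aG retG] := GQ _ (QF _ jK).
  move: aG retG; rewrite /F e1 e2 => aG retG.
  have mesh : (x1 - grid_point m j1) + (x2 - grid_point m j2) * T < eps.
    rewrite -(ltr_pM2r m_gt0); move: mM; rewrite ltr_pdivrMr // => mM; nra.
  by apply: rec_traj_translate aG tau2 retG _ _ _ _ => //=; nra.
have [N rN /andP[N1 NK]] := min_spanning_fin (@Qsq_origin R) (fun i iK => (GQ _ (QF i iK)).1) cover.
exists N => //; rewrite N1 /=; apply: le_trans NK _.
have K_le : K%:R <= (4 / eps + 3) * T :> R.
  have : (1 + T) / eps <= 2 / eps * T by rewrite mulrAC ler_pM2r ?invr_gt0 //; lra.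
  rewrite /K -[(2 * m).+1]addn1 natrD natrM.
  have : (4 / eps + 3) * T = 2 * (2 / eps * T) + 3 * T by ring.
  lra.
by rewrite natrM expr2; apply: ler_pM.
Qed.

End grid_cover.

Section entropies.
Context {R : realType}.

Lemma h_inv_Qsq : h_inv (@Qsq R) = +oo%E.
Proof.
apply: (@entropy_of_pinfty _ _ (1 / 2) 1) => [|eps T eps_bnd T1]; first lra.
exact: r_inv_Qsq_small_eps.
Qed.

Lemma h_rec_Qsq_lt2 (tau : R) : 0 < tau < 2 -> h_rec tau (@Qsq R) = +oo%E.
Proof.
move=> /andP[tau0 tau2]; have e0 : 0 < (1 - tau ^+ 2 / 4) / 2 by nra.
apply: (entropy_of_pinfty (T0 := 2) e0) => eps T /andP[eps0 eps_lt] T2.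
by apply: r_rec_Qsq_small_eps => //; apply/andP.
Qed.

Lemma h_rec_Qsq_ge2 (tau : R) : 2 <= tau -> h_rec tau (@Qsq R) = 0%E.
Proof.
move=> tau2; apply: (@entropy_of_eventually_cst _ _ 1) => // eps /andP[eps0 _].
apply: limf_esup_pinfty_eq0 => [T T1|e e0].
  have [N -> /andP[N1 _]] := r_rec_Qsq_quadratic eps0 T1 tau2.
  rewrite -EFinM lee_fin mulr_ge0 ?invr_ge0 ?divr_ge0 ?ln_ge0 //; lra.
have C0 : 0 < 4 / eps + 3 by rewrite addr_gt0 ?divr_gt0.
have [T0 [T01 rate_le]] := log2_quadratic_rate_le C0 e0.
exists T0 => T T0T; have T1 : 1 <= T by lra.
have [N -> /andP[N1 NC]] := r_rec_Qsq_quadratic eps0 T1 tau2.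
by rewrite -EFinM lee_fin; exact: rate_le.
Qed.

End entropies.

Unset Implicit Arguments.

Theorem mainTheorem6 (R : realType) :
  (~ controlled_invariant (@Qsq R)) /\
      (forall tau : R, 0 < tau < 2 -> ~ controlled_recurrent tau (@Qsq R)) /\
      h_inv (@Qsq R) = +oo%E /\
      (forall tau : R, 0 < tau < 2 -> h_rec tau (@Qsq R) = +oo%E) /\
      controlled_recurrent 2 (@Qsq R) /\
      (forall tau : R, 2 <= tau -> (h_rec tau (@Qsq R) <= (2 / ln 2)%:E)%E).
Proof.
split; first exact: Qsq_not_controlled_invariant.
split; first exact: Qsq_not_controlled_recurrent.
split; first exact: h_inv_Qsq.
split; first exact: h_rec_Qsq_lt2.
split; first exact: Qsq_controlled_recurrent_2.
move=> tau tau2; rewrite h_rec_Qsq_ge2 // lee_fin divr_ge0 // ln_ge0 //.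
by rewrite ler1n.
Qed.
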